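(* Let $\Bbbk$ be a field of characteristic $0$, $n\ge2$, and let $(A,\mu,\alpha)$ be a multiplicative $n$-ary totally Hom-associative algebra over $\Bbbk$, with $\mu(a_1,\ldots,a_n)=(a_1\cdots a_n)$. Define a $(2n-1)$-linear product by $(a_1,\ldots,a_{2n-1})^{(1)}=\big((a_1\cdots a_n),\alpha(a_{n+1}),\ldots,\alpha(a_{2n-1})\big)$ (the outer bracket being $\mu$). Then $A^1=(A,(\cdot)^{(1)},\alpha^2)$, with all $2n-2$ twisting maps equal to $\alpha^2$, is a multiplicative $(2n-1)$-ary totally Hom-associative algebra.
   Context: An $m$-ary Hom-algebra $(V,\mu,(\alpha_1,\ldots,\alpha_{m-1}))$ is a vector space $V$ with an $m$-linear map $\mu$ (written $\mu(a_1,\ldots,a_m)=(a_1\cdots a_m)$) and linear maps $\alpha_i\colon V\to V$. It is multiplicative if all $\alpha_i$ equal one map $\alpha$ and $\alpha\circ\mu=\mu\circ\alpha^{\otimes m}$. It is $m$-ary totally Hom-associative if for every $i\in\{1,\ldots,m-1\}$ and all $a_1,\ldots,a_{2m-1}$: $(\alpha_1(a_1),\ldots,\alpha_{i-1}(a_{i-1}),(a_i\cdots a_{i+m-1}),\alpha_i(a_{i+m}),\ldots,\alpha_{m-1}(a_{2m-1}))=(\alpha_1(a_1),\ldots,\alpha_i(a_i),(a_{i+1}\cdots a_{i+m}),\alpha_{i+1}(a_{i+m+1}),\ldots,\alpha_{m-1}(a_{2m-1}))$. *)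

From HB Require Import structures.
From mathcomp Require Import all_boot all_order all_algebra.
Set Implicit Arguments. Unset Strict Implicit. Unset Printing Implicit Defensive.
Import Order.TTheory GRing.Theory.
Local Open Scope ring_scope.

Section NaryHom.
Variables (K : fieldType) (V : lmodType K).

Definition upd (m : nat) (a : 'I_m -> V) (i : 'I_m) (x : V) : 'I_m -> V :=
  fun j => if j == i then x else a j.

Definition multilinear (m : nat) (mu : ('I_m -> V) -> V) : Prop :=
  forall (i : 'I_m) (a : 'I_m -> V) (c : K) (x y : V),
    mu (upd a i (c *: x + y)) = c *: mu (upd a i x) + mu (upd a i y).

Definition linear_map (f : V -> V) : Prop :=
  forall (c : K) (x y : V), f (c *: x + y) = c *: f x + f y.

Definition multiplicative (m : nat) (mu : ('I_m -> V) -> V) (alpha : V -> V) : Prop :=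
  forall a : 'I_m -> V, alpha (mu a) = mu (fun j => alpha (a j)).

(* Entries a_0, ..., a_{2m-2} (0-based) are read off a : nat -> V.
   comp_at k a = (alpha a_0, ..., alpha a_{k-1}, (a_k ... a_{k+m-1}),
                  alpha a_{k+m}, ..., alpha a_{2m-2}),
   i.e. the inner product sits in (0-based) position k. All twisting maps
   equal alpha. *)
Definition comp_at (m : nat) (mu : ('I_m -> V) -> V) (alpha : V -> V)
    (a : nat -> V) (k : nat) : V :=
  mu (fun j : 'I_m =>
        if (j < k)%N then alpha (a j)
        else if (j == k :> nat) then mu (fun l : 'I_m => a (k + l)%N)
        else alpha (a (j + m - 1)%N)).

Definition totally_hom_assoc (m : nat) (mu : ('I_m -> V) -> V) (alpha : V -> V) : Prop :=
  forall (k : nat), (k.+1 < m)%N -> forall a : nat -> V,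
    comp_at mu alpha a k = comp_at mu alpha a k.+1.

Definition mult_tot_hom_assoc_alg (m : nat) (mu : ('I_m -> V) -> V) (alpha : V -> V) : Prop :=
  [/\ multilinear mu, linear_map alpha, multiplicative mu alpha
    & totally_hom_assoc mu alpha].

Definition ext (p : nat) (a : 'I_p -> V) : nat -> V :=
  fun l => match insub l with Some o => a o | None => 0 end.

Definition mu1 (n : nat) (mu : ('I_n -> V) -> V) (alpha : V -> V)
    (a : 'I_(2 * n - 1) -> V) : V :=
  mu (fun j : 'I_n =>
        if (j == 0 :> nat) then mu (fun l : 'I_n => ext a l)
        else alpha (ext a (j + n - 1)%N)).

End NaryHom.

From Pilot Require Import Defs.
From HB Require Import structures.
From mathcomp Require Import all_boot all_order all_algebra.
From mathcomp Require Import zify.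
From Stdlib Require Import FunctionalExtensionality.
Import GRing.Theory.
Local Open Scope ring_scope.

Set Implicit Arguments.
Unset Strict Implicit.

(* Iterating total Hom-associativity moves the inner product of a composite
   [comp_at mu alpha a k] (k < n) to the front.  Using this and the
   multiplicativity of alpha, every composite of the (2n-1)-ary product with
   twist alpha^2, whatever the position of its inner product, equals the same
   left-normed product
     ((((a_0 .. a_{n-1}) alpha a_n .. alpha a_{2n-2}) alpha^2 a_{2n-1} ..
        alpha^2 a_{3n-3}) alpha^3 a_{3n-2} .. alpha^3 a_{4n-4}),
   so composites at consecutive positions agree. *)

Ltac case_ifs := repeat match goal with |- context[if ?b then _ else _] =>
  let H := fresh "H" in case H: b; try (exfalso; lia) end.

Ltac congr_lia := try reflexivity;
  try (repeat (match goal with |- @eq ?T (?f ?x) (?f ?y) =>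
    match T with nat => fail 1 | _ => congr (f _) end end); lia).

Section NaryHomAlgebra.
Variables (K : fieldType) (V : lmodType K).

Lemma linear_map0 (f : V -> V) : linear_map f -> f 0 = 0.
Proof. by move=> lin_f; have := lin_f (-1) 0 0; rewrite scaler0 add0r scaleN1r addNr. Qed.

Lemma ext_lt p (b : 'I_p -> V) l (lt_lp : (l < p)%N) : ext b l = b (Ordinal lt_lp).
Proof. by rewrite /ext insubT; congr b; apply: val_inj. Qed.

Lemma ext_upd p (b : 'I_p -> V) i x l :
  ext (upd b i x) l = if l == (i : nat) then x else ext b l.
Proof.
case: (ltnP l p) => lp; first by rewrite !(ext_lt _ lp) /upd.
rewrite /ext insubF ?ltnNge ?lp //; case: eqP => // li.
by move: lp; rewrite li leqNgt ltn_ord.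
Qed.

Variables (n : nat) (mu : ('I_n -> V) -> V) (alpha : V -> V).
Hypothesis n_gt1 : (1 < n)%N.

Lemma eq_mu (F G : 'I_n -> V) : (forall j, F j = G j) -> mu F = mu G.
Proof. by move=> FG; congr mu; apply: functional_extensionality. Qed.

(* The arguments of [comp_at mu alpha a k], as a nat-indexed family; the same
   formula beyond index n makes [comp_args a 0] the argument list of [mu1]. *)
Definition comp_args (a : nat -> V) (k i : nat) : V :=
  if (i < k)%N then alpha (a i)
  else if i == k then mu (fun l : 'I_n => a (k + l)%N)
  else alpha (a (i + n - 1)%N).

Lemma mu1_ext (a : nat -> V) :
  mu1 mu alpha (fun j : 'I_(2 * n - 1) => a j) = mu (fun j : 'I_n => comp_args a 0 j).
Proof.
apply: eq_mu => j; have jn := ltn_ord j; rewrite /comp_args /=.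
case: eqP => _; last by rewrite (@ext_lt _ _ (j + n - 1)) //; lia.
by apply: eq_mu => l; rewrite (@ext_lt _ _ l) //; have := ltn_ord l; lia.
Qed.

Section Multilinearity.
Hypotheses (mu_lin : multilinear mu) (alpha_lin : linear_map alpha).

Lemma mu1_linear_head (b : 'I_(2 * n - 1) -> V) (i : 'I_(2 * n - 1)) c x y :
  (i < n)%N -> mu1 mu alpha (upd b i (c *: x + y)) =
  c *: mu1 mu alpha (upd b i x) + mu1 mu alpha (upd b i y).
Proof.
move=> lt_in; pose o : 'I_n := Ordinal (ltnW n_gt1).
pose B (j : 'I_n) := if j == 0 :> nat then 0 else alpha (ext b (j + n - 1)%N).
pose head v := mu (upd (fun l : 'I_n => ext b l) (Ordinal lt_in) v).
have mu1E v : mu1 mu alpha (upd b i v) = mu (upd B o (head v)).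
  apply: eq_mu => j; rewrite {3}/upd /B /head -val_eqE /=.
  case: eqP => [_|j_neq0]; first by apply: eq_mu => l; rewrite ext_upd.
  by rewrite ext_upd; case: eqP => // ?; lia.
by rewrite !mu1E /head !mu_lin.
Qed.

Lemma mu1_linear_tail (b : 'I_(2 * n - 1) -> V) (i : 'I_(2 * n - 1)) c x y :
  (n <= i)%N -> mu1 mu alpha (upd b i (c *: x + y)) =
  c *: mu1 mu alpha (upd b i x) + mu1 mu alpha (upd b i y).
Proof.
move=> le_ni; have lt_i := ltn_ord i.
have lt_pos : (i - n + 1 < n)%N by lia.
pose B (j : 'I_n) := if j == 0 :> nat then mu (fun l : 'I_n => ext b l)
                     else alpha (ext b (j + n - 1)%N).
have mu1E v : mu1 mu alpha (upd b i v) = mu (upd B (Ordinal lt_pos) (alpha v)).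
  apply: eq_mu => j; rewrite {3}/upd /B -val_eqE /=.
  case: eqP => [j0|j_neq0].
    case: eqP => [?|_]; first lia.
    by apply: eq_mu => l; rewrite ext_upd; case: eqP => // ?; have := ltn_ord l; lia.
  rewrite ext_upd (_ : (j + n - 1 == i :> nat)%N = (j == i - n + 1 :> nat)%N).
    by case: (j == _ :> nat).
  by apply/eqP/eqP; lia.
by rewrite !mu1E alpha_lin mu_lin.
Qed.

Lemma mu1_multilinear : multilinear (mu1 mu alpha).
Proof.
move=> i b c x y; case: (ltnP i n) => [lt_in|le_ni].
- exact: mu1_linear_head.
- exact: mu1_linear_tail.
Qed.

End Multilinearity.

(* [ext] pads with 0, hence multiplicativity of [mu1] needs [alpha 0 = 0]. *)
Lemma ext_comp (f : V -> V) : f 0 = 0 ->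
  forall p (b : 'I_p -> V) l, ext (fun j => f (b j)) l = f (ext b l).
Proof. by move=> f0 p b l; rewrite /ext; case: insub. Qed.

Lemma mu1_multiplicative : linear_map alpha -> Defs.multiplicative mu alpha ->
  Defs.multiplicative (mu1 mu alpha) (fun x => alpha (alpha x)).
Proof.
move=> /linear_map0 alpha0 mu_mult b; rewrite /mu1 !mu_mult.
have alpha2_0 : alpha (alpha 0) = 0 by rewrite !alpha0.
have ext_alpha2 := @ext_comp (fun x => alpha (alpha x)) alpha2_0.
apply: eq_mu => j; case: eqP => _; last by rewrite ext_alpha2.
by rewrite !mu_mult; apply: eq_mu => l; rewrite ext_alpha2.
Qed.

Section Associativity.
Hypotheses (mu_mult : Defs.multiplicative mu alpha) (mu_assoc : totally_hom_assoc mu alpha).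

Lemma comp_at_0 a k : (k < n)%N -> comp_at mu alpha a k = comp_at mu alpha a 0.
Proof. by elim: k => // k IHk lt_kn; rewrite -mu_assoc // IHk // ltnW. Qed.

Lemma comp_at0_comp_args b p : (p < n)%N ->
  comp_at mu alpha (comp_args b p) 0 =
  mu (fun j : 'I_n => if j == 0 :> nat then comp_at mu alpha b 0
                      else alpha (alpha (b (j + 2 * n - 2)%N))).
Proof.
move=> lt_pn; apply: eq_mu => j; have := ltn_ord j; rewrite /comp_args /=.
case: eqP => [_ _|j_neq0 lt_jn]; first by rewrite -(comp_at_0 b lt_pn).
by case_ifs; congr_lia.
Qed.

Lemma comp_at_mu1 a k :
  comp_at (mu1 mu alpha) (fun x => alpha (alpha x)) a k =
  mu (fun j : 'I_n => comp_args (fun x =>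
        if (x < k)%N then alpha (alpha (a x))
        else if x == k then mu (fun l : 'I_n => comp_args (fun i => a (k + i)%N) 0 l)
        else alpha (alpha (a (x + 2 * n - 2)%N))) 0 j).
Proof.
rewrite /comp_at (mu1_ext (fun l => a (k + l)%N)).
rewrite (mu1_ext (fun x => if (x < k)%N then alpha (alpha (a x))
  else if x == k then mu (fun l : 'I_n => comp_args (fun i => a (k + i)%N) 0 l)
  else alpha (alpha (a (x + (2 * n - 1) - 1)%N)))).
apply: eq_mu => j; rewrite /comp_args; case_ifs; congr_lia.
by apply: eq_mu => l; case_ifs; congr_lia.
Qed.

Definition left_normed (a : nat -> V) : V :=
  mu (fun j : 'I_n => if j == 0 :> nat then comp_at mu alpha (comp_args a 0) 0
                      else alpha (alpha (alpha (a (j + 3 * n - 3)%N)))).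

Lemma comp_at_mu1_head a k : (k < n)%N ->
  comp_at (mu1 mu alpha) (fun x => alpha (alpha x)) a k = left_normed a.
Proof.
move=> lt_kn; rewrite comp_at_mu1; apply: eq_mu => j; rewrite {1}/comp_args /=.
case: eqP => [_|j_neq0]; last by case_ifs; congr_lia.
transitivity (comp_at mu alpha (comp_args a k) k).
  apply: eq_mu => l; rewrite /comp_args; case_ifs; congr_lia.
  by apply: eq_mu => l'; case_ifs; congr_lia.
by rewrite comp_at_0 // !comp_at0_comp_args // ltnW.
Qed.

Lemma comp_at_mu1_tail a k : (n <= k)%N -> (k < 2 * n - 1)%N ->
  comp_at (mu1 mu alpha) (fun x => alpha (alpha x)) a k = left_normed a.
Proof.
move=> le_nk lt_k; have lt_pn : (k - n + 1 < n)%N by lia.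
rewrite comp_at_mu1.
transitivity (comp_at mu alpha (comp_args (comp_args a 0) (k - n + 1)) (k - n + 1)).
{ apply: eq_mu => j; move: (ltn_ord j) => lt_jn; rewrite /comp_args.
  case_ifs; congr_lia; rewrite ?mu_mult.
  all: apply: eq_mu => l; move: (ltn_ord l) => lt_ln; case_ifs; congr_lia.
  rewrite mu_mult; apply: eq_mu => l'; move: (ltn_ord l') => lt_l'n; case_ifs; congr_lia. }
rewrite comp_at_0 // comp_at0_comp_args //; apply: eq_mu => j.
by case: ifP => // /negbT j_neq0; rewrite /comp_args; case_ifs; congr_lia.
Qed.

Lemma comp_at_mu1_left_normed a k : (k < 2 * n - 1)%N ->
  comp_at (mu1 mu alpha) (fun x => alpha (alpha x)) a k = left_normed a.
Proof.
case: (ltnP k n) => [lt_kn _|le_nk lt_k].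
- exact: comp_at_mu1_head.
- exact: comp_at_mu1_tail.
Qed.

Lemma mu1_totally_hom_assoc :
  totally_hom_assoc (mu1 mu alpha) (fun x => alpha (alpha x)).
Proof.
move=> k lt_k a; rewrite !comp_at_mu1_left_normed //; exact: ltnW.
Qed.

End Associativity.

End NaryHomAlgebra.

Unset Implicit Arguments.

Theorem theorem3p1 (K : fieldType) (V : lmodType K) (n : nat)
    (mu : ('I_n -> V) -> V) (alpha : V -> V) :
  [pchar K] =i pred0 ->
  (2 <= n)%N ->
  mult_tot_hom_assoc_alg mu alpha ->
  mult_tot_hom_assoc_alg (mu1 mu alpha) (fun x => alpha (alpha x)).
Proof.
move=> _ n_gt1 [mu_lin alpha_lin mu_mult mu_assoc]; split.
- exact: mu1_multilinear.
- by move=> c x y; rewrite !alpha_lin.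
- exact: mu1_multiplicative.
- exact: mu1_totally_hom_assoc.
Qed.
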